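(* Let $K$ be a field and $m,n,r$ positive integers. Let $R=K[x_{ij}^k \mid 1\le i\le m,\ 1\le j\le n,\ 1\le k\le r]$ and let $I_{mn}^r$ be the ideal generated by all $2$-minors of the horizontal concatenation $H=(X_1\ \cdots\ X_r)$ and all $2$-minors of the vertical concatenation $V$ of the $m\times n$ matrices $X_k=(x_{ij}^k)$. Fix a diagonal term order, and let $\Delta$ be the simplicial complex on the vertex set $\mathcal P=\{(i,j):1\le i\le m,\ 1\le j\le nr\}$ whose Stanley–Reisner ideal is $\operatorname{in}(I_{mn}^r)$, where the variable $x_{ij}^k$ is identified with the vertex $(i,(k-1)n+j)$. Then a subset $F\subseteq\mathcal P$ is a facet of $\Delta$ if and only if there exist integers $m=g_0\ge g_1\ge\cdots\ge g_{r-1}\ge g_r=1$ and $n=h_0\ge h_1\ge\cdots\ge h_{r-1}\ge h_r=1$ such that $F$ is the union of $r$ paths $$(g_{k-1},(k-1)n+h_k)\longrightarrow (g_k,(k-1)n+h_{k-1}),\qquad 1\le k\le r.$$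
   Context: A term order is diagonal if the leading term of every $2$-minor of $H$ and of $V$ is the product of the entries on its main diagonal. A path from $(g_1,h_1)$ to $(g_t,h_t)$, written $(g_1,h_1)\longrightarrow(g_t,h_t)$, is a subset $\{(g_1,h_1),\dots,(g_t,h_t)\}\subseteq\mathcal P$ with $(g_{s+1},h_{s+1})-(g_s,h_s)\in\{(-1,0),(0,1)\}$ for all $s=1,\dots,t-1$; a single point $(g,h)$ is regarded as the path $(g,h)\longrightarrow(g,h)$. *)

From mathcomp Require Import all_boot all_algebra.
From mathcomp Require Import mpoly.
Set Implicit Arguments. Unset Strict Implicit. Unset Printing Implicit Defensive.
Import GRing.Theory.
Local Open Scope ring_scope.

(* Vertex set P = {(i,c) : 0 <= i < m, 0 <= c < r*n}, 0-based;
   vertex (i,c) corresponds to the paper's (i+1, c+1). *)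
Definition Pt (m n r : nat) := ('I_m * 'I_(r * n))%type.
Definition NV (m n r : nat) := #|{: Pt m n r}|.

Section Defs.
Variables (K : fieldType) (m n r : nat).

Notation P := (Pt m n r).
Notation N := (NV m n r).
Notation poly := {mpoly K[N]}.

Definition var (v : P) : poly := 'X_(enum_rank v).

Lemma colidx_proof (k : 'I_r) (j : 'I_n) : (k * n + j < r * n)%N.
Proof.
case: k j => k hk [j hj] /=.
apply: (@leq_trans (k * n + n)); first by rewrite ltn_add2l.
by rewrite -mulSnr leq_mul2r hk orbT.
Qed.

Definition colidx (k : 'I_r) (j : 'I_n) : 'I_(r * n) := Ordinal (colidx_proof k j).

Definition x (i : 'I_m) (j : 'I_n) (k : 'I_r) : poly := var (i, colidx k j).

Definition minor2 (I J : Type) (A : I -> J -> poly) a1 a2 b1 b2 : poly :=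
  A a1 b1 * A a2 b2 - A a1 b2 * A a2 b1.
Definition diag2 (I J : Type) (A : I -> J -> poly) a1 a2 b1 b2 : poly :=
  A a1 b1 * A a2 b2.

Definition H (i : 'I_m) (c : 'I_(r * n)) : poly := var (i, c).
(* V = vertical concatenation, rows indexed by (k,i) ~ row (k-1)m + i *)
Definition V (ki : 'I_r * 'I_m) (j : 'I_n) : poly := x ki.2 j ki.1.
Definition Vrow (ki : 'I_r * 'I_m) : nat := (ki.1 * m + ki.2)%N.

Definition is_H_minor (g d : poly) : Prop :=
  exists (i1 i2 : 'I_m) (c1 c2 : 'I_(r * n)),
    [/\ (i1 < i2)%N, (c1 < c2)%N, g = minor2 H i1 i2 c1 c2 & d = diag2 H i1 i2 c1 c2].
Definition is_V_minor (g d : poly) : Prop :=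
  exists (a1 a2 : 'I_r * 'I_m) (j1 j2 : 'I_n),
    [/\ (Vrow a1 < Vrow a2)%N, (j1 < j2)%N, g = minor2 V a1 a2 j1 j2
      & d = diag2 V a1 a2 j1 j2].

Definition is_2minor (g : poly) : Prop :=
  exists d, is_H_minor g d \/ is_V_minor g d.

Definition in_ideal (G : poly -> Prop) (q : poly) : Prop :=
  exists s : seq (poly * poly),
    (forall pr, pr \in s -> G pr.2) /\ q = \sum_(pr <- s) pr.1 * pr.2.

Definition Imnr : poly -> Prop := in_ideal is_2minor.

Definition term_order (le : rel 'X_{1..N}) : Prop :=
  [/\ reflexive le, antisymmetric le, transitive le & total le] /\
  (forall u, le 0%MM u) /\
      (forall u v w, le u v -> le (u + w)%MM (v + w)%MM).

Definition is_lead (le : rel 'X_{1..N}) (p : poly) (u : 'X_{1..N}) : Prop :=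
  u \in msupp p /\ forall v, v \in msupp p -> le v u.

Definition lead_term_is (le : rel 'X_{1..N}) (p t : poly) : Prop :=
  exists u, is_lead le p u /\ t = p@_u *: 'X_[u].

Definition diagonal (le : rel 'X_{1..N}) : Prop :=
  term_order le /\
  forall g d, is_H_minor g d \/ is_V_minor g d -> lead_term_is le g d.

Definition initial_ideal (le : rel 'X_{1..N}) (I : poly -> Prop) : poly -> Prop :=
  in_ideal (fun t => exists p, [/\ I p, p != 0 & lead_term_is le p t]).

Definition SR_face (J : poly -> Prop) (F : {set P}) : Prop :=
  ~ J (\prod_(v in F) var v).
Definition SR_facet (J : poly -> Prop) (F : {set P}) : Prop :=
  SR_face J F /\ forall G : {set P}, SR_face J G -> F \subset G -> G = F.

(* paths, in 1-based coordinates (row g in 1..m, column h in 1..rn):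
   S is a path (a --> b) if it is the point set of a nonempty sequence of
   points of P starting at a, ending at b, with steps (-1,0) or (0,1). *)
Definition step (p q : nat * nat) : bool :=
  ((q.1.+1 == p.1) && (q.2 == p.2)) || ((q.1 == p.1) && (q.2 == p.2.+1)).
Definition in_P (p : nat * nat) : bool :=
  [&& (1 <= p.1)%N, (p.1 <= m)%N, (1 <= p.2)%N & (p.2 <= r * n)%N].
Definition is_path (S : {set P}) (a b : nat * nat) : Prop :=
  exists s : seq (nat * nat),
    [/\ all in_P (a :: s), path step a s, last a s = b &
        S = [set v : P | ((v.1 : nat).+1, (v.2 : nat).+1) \in a :: s]].

End Defs.

From mathcomp Require Import all_boot all_algebra.
From mathcomp Require Import mpoly.
From mathcomp Require Import zify.
Set Implicit Arguments. Unset Strict Implicit. Unset Printing Implicit Defensive.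
Import GRing.Theory.

(* The faces of the Stanley-Reisner complex of in(I) are the vertex sets F that
   contain no main diagonal of a 2-minor of H or V: such a diagonal product is a
   leading term, and conversely no leading monomial of I is "standard" (divisible
   by no diagonal product). For the latter, grade monomials by degree and by the
   number of factors in each row, block and column of a block; the 2-minors are
   homogeneous binomials. The supports of a standard monomial in H and in the
   block-by-column matrix are staircases, which are determined by their margins,
   so a grade class contains at most one standard monomial. Trading a diagonal for
   the antidiagonal lowers both the term order and a potential, hence the standard
   monomial is the least of its class; and the sum of the coefficients over a
   class vanishes on I, so a standard monomial is never a leading monomial of I.

   Facets are thus the maximal diagonal-free sets. Within one block such a set is
   a chain for the north-east order, so it extends to a lattice path between
   corners read off from the set, and the union of these paths is still
   diagonal-free. Conversely, a vertex off such a union of paths forms a diagonal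
   with an endpoint of a neighbouring path if it lies outside the rectangle of its
   block, and with the point of its own path on the same antidiagonal otherwise. *)

(** * Lattice paths *)

Definition northeast (x y : nat * nat) : bool := (y.1 <= x.1) && (x.2 <= y.2).
Definition in_rect (a b x : nat * nat) : bool := northeast a x && northeast x b.
Definition ne_comparable (x y : nat * nat) : bool := northeast x y || northeast y x.

Lemma northeast_refl : reflexive northeast.
Proof. by move=> x; rewrite /northeast !leqnn. Qed.

Lemma northeast_trans : transitive northeast.
Proof. by move=> y x z /andP [? ?] /andP [? ?]; apply/andP; split; lia. Qed.

Lemma stepP p q : step p q ->
  (q.1.+1 = p.1 /\ q.2 = p.2) \/ (q.1 = p.1 /\ q.2 = p.2.+1).
Proof. by case/orP => /andP [/eqP -> /eqP ->]; [left | right]. Qed.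

Lemma step_northeast : subrel step northeast.
Proof. by move=> p q /stepP [] [e1 e2]; rewrite /northeast -e1 e2; lia. Qed.

Lemma path_step_sorted a s : path step a s -> sorted northeast (a :: s).
Proof. exact: (sub_path step_northeast). Qed.

Lemma path_northeast_nth a s : path step a s -> forall i j, i <= j <= size s ->
  northeast (nth a (a :: s) i) (nth a (a :: s) j).
Proof.
move=> /path_step_sorted srt i j /andP [le_ij le_j].
apply: (sorted_leq_nth northeast_trans northeast_refl) => //.
by rewrite inE /= ltnS //; lia.
Qed.

Lemma path_in_rect a s x : path step a s -> x \in a :: s -> in_rect a (last a s) x.
Proof.
move=> pth xs; have ix : index x (a :: s) <= size s by rewrite -ltnS index_mem.
have := path_northeast_nth (i := 0) (j := index x (a :: s)) pth.
have := path_northeast_nth (i := index x (a :: s)) (j := size s) pth.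
rewrite (nth_last a (a :: s)) nth_index //= ix leqnn /in_rect => h2 h1.
by rewrite h1 ?h2.
Qed.

Lemma path_comparable a s x y : path step a s -> x \in a :: s -> y \in a :: s ->
  ne_comparable x y.
Proof.
move=> pth xs ys; have ix : index x (a :: s) <= size s by rewrite -ltnS index_mem.
have iy : index y (a :: s) <= size s by rewrite -ltnS index_mem.
rewrite /ne_comparable -(nth_index a xs) -(nth_index a ys).
case: (leqP (index x (a :: s)) (index y (a :: s))) => [le|/ltnW le]; apply/orP;
  [left | right]; by apply: path_northeast_nth; rewrite // le.
Qed.

Lemma path_meets_diagonal a s t : path step a s ->
  t <= (a.1 - (last a s).1) + ((last a s).2 - a.2) ->
  exists2 x, x \in a :: s & (a.1 - x.1) + (x.2 - a.2) = t.
Proof.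
elim: s a t => [|y s IH] [a1 a2] [|t] /= pth le_t;
  try by exists (a1, a2); rewrite ?mem_head //=; lia.
case/andP: pth => /stepP ay pth.
have /andP [_ yl] := path_in_rect pth (mem_head y s).
have [|[x1 x2] xs dx] := IH y t pth.
  by move: le_t yl ay; case: (last y s) => l1 l2; case: y {pth} => y1 y2 /=; lia.
exists (x1, x2); first by rewrite inE xs orbT.
have /andP [yx _] := path_in_rect pth xs.
by move: dx yx ay; case: y {pth xs le_t yl} => y1 y2; rewrite /northeast /=; lia.
Qed.

(* Stepping right is forced when a point of [cs] lies further right on the
   current row (or the target row is reached); otherwise stepping up keeps all
   the points of the chain [cs] ahead. *)
Definition chain_next (b : nat * nat) (cs : seq (nat * nat)) (a : nat * nat) :=
  if (a.1 == b.1) || has (fun x => (x.1 == a.1) && (a.2 < x.2)) cs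
  then (a.1, a.2.+1) else (a.1.-1, a.2).

Lemma chain_next_step a b cs : northeast a b -> a != b -> all (in_rect a b) cs ->
  [&& step a (chain_next b cs a), northeast (chain_next b cs a) b
    & (chain_next b cs a).1 - b.1 + (b.2 - (chain_next b cs a).2)
      < a.1 - b.1 + (b.2 - a.2)].
Proof.
case: a b => a1 a2 [b1 b2] ab nab rect; move: ab nab.
rewrite /chain_next /step /northeast xpair_eqE /=; case: eqP => [e|ne] /=; first by lia.
case: (boolP (has _ cs)) => [/hasP [y yc /andP [/eqP y1 y2]] | _] /=; last by lia.
have := allP rect y yc; case: y {yc} y1 y2 => y1 y2 /= -> ?.
by rewrite /in_rect /northeast /=; lia.
Qed.

Lemma chain_next_rect a b cs : all (in_rect a b) cs ->
  {in cs &, forall x y, ne_comparable x y} ->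
  all (in_rect (chain_next b cs a) b) [seq x <- cs | x != a].
Proof.
case: a b => a1 a2 [b1 b2] rect cmp; apply/allP => x; rewrite mem_filter => /andP [xa xc].
have := allP rect x xc; rewrite /chain_next /=; case: (a1 =P b1) => [e|ne] /=.
  by move: xa; case: x {xc} => x1 x2; rewrite /in_rect /northeast xpair_eqE /= e; lia.
case: (boolP (has _ cs)) => [/hasP [y yc /andP [/eqP y1 y2]] | /hasPn nhas] /=.
  have := cmp x y xc yc; move: xa; rewrite /ne_comparable /in_rect /northeast.
  by case: x y {xc yc} y1 y2 => x1 x2 [y1 y2] /= -> ?; rewrite xpair_eqE; lia.
have := nhas x xc; move: xa; rewrite /in_rect /northeast.
by case: x {xc} => x1 x2 /=; rewrite xpair_eqE; lia.
Qed.

Lemma chain_sub_path a b cs : northeast a b -> all (in_rect a b) cs ->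
  {in cs &, forall x y, ne_comparable x y} ->
  exists s, [/\ path step a s, last a s = b & {subset cs <= a :: s}].
Proof.
have [d] := ubnP ((a.1 - b.1) + (b.2 - a.2)); elim: d a cs => // d IH a cs ltd ab rect cmp.
case: (eqVneq a b) => [eab | nab].
  exists [::]; rewrite -eab; split=> // x xc; move: (allP rect x xc); rewrite -eab mem_seq1.
  case: x a {ab rect ltd xc eab} => x1 x2 [a1 a2].
  by rewrite /in_rect /northeast xpair_eqE /=; lia.
have /and3P [aa' a'b lt_a'b] := chain_next_step ab nab rect.
have [|s [pth lst sub]] := IH _ _ (leq_trans lt_a'b ltd) a'b (chain_next_rect rect cmp).
  by move=> x y; rewrite !mem_filter => /andP [_ xc] /andP [_ yc]; apply: cmp.
exists (chain_next b cs a :: s); split=> //=; first by rewrite aa'.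
move=> x xc; rewrite inE; case: (eqVneq x a) => //= xa.
by apply: sub; rewrite mem_filter xa.
Qed.

(** * Staircase matrices *)

Lemma sumn_subn_indicator (I : finType) (F : I -> nat) (c : bool) i0 :
  (c -> 0 < F i0) -> \sum_i (F i - (c && (i == i0))) = \sum_i F i - c.
Proof.
case: c => [/(_ isT) Fi0|_]; last by rewrite subn0; apply: eq_bigr => i _; rewrite subn0.
rewrite (bigD1 i0) //= [in RHS](bigD1 i0) //= eqxx.
under eq_bigr => i /negbTE -> do rewrite subn0.
lia.
Qed.

Lemma sumn_pos (I : finType) (F : I -> nat) : 0 < \sum_i F i -> exists i, 0 < F i.
Proof.
move=> pos; case: (pickP (fun i => 0 < F i)) => [i|F0]; first by exists i.
by move: pos; rewrite big1 // => i _; move: (F0 i) => /negbT; rewrite -leqNgt leqn0 => /eqP.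
Qed.

Lemma sumn_eq0 (I : finType) (F : I -> nat) : \sum_i F i = 0 -> F =1 (fun=> 0).
Proof. by move/eqP; rewrite sum_nat_eq0 => /forallP F0 i; apply/eqP/F0. Qed.

Section Staircase.
Variables p q : nat.
Implicit Types f g : 'I_p -> 'I_q -> nat.

(* The support of [f] is a chain for the order in which rows increase
   while columns decrease (the shape produced by the north-west corner rule). *)
Definition staircase f :=
  forall (a1 a2 : 'I_p) (b1 b2 : 'I_q), a1 < a2 -> b1 < b2 -> f a1 b1 * f a2 b2 = 0.

Lemma staircase_le f g : (forall a b, f a b <= g a b) -> staircase g -> staircase f.
Proof.
move=> le_fg sg a1 a2 b1 b2 lt_a lt_b; have := sg a1 a2 b1 b2 lt_a lt_b.
have := le_fg a1 b1; have := le_fg a2 b2; nia.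
Qed.

Lemma staircase_corner f a0 b0 : staircase f ->
  0 < \sum_b f a0 b -> (forall a, 0 < \sum_b f a b -> a <= a0) ->
  0 < \sum_a f a b0 -> (forall b, 0 < \sum_a f a b -> b0 <= b) ->
  0 < f a0 b0.
Proof.
move=> sf /sumn_pos [b1 pos1] a0_max /sumn_pos [a1 pos1'] b0_min.
have le_b : b0 <= b1 by apply: b0_min; rewrite (bigD1 a0) //= ltn_addr.
have le_a : a1 <= a0 by apply: a0_max; rewrite (bigD1 b0) //= ltn_addr.
case: (eqVneq b1 b0) => [<- //|nb]; case: (eqVneq a1 a0) => [<- //|na].
have := sf a1 a0 b0 b1; rewrite !ltn_neqAle le_a le_b.
have /negPf-> : (a1 : nat) != a0 by apply: contra na => /eqP/val_inj ->.
have /negPf-> : (b0 : nat) != b1 by apply: contra nb => /eqP/val_inj ->.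
by move=> /(_ isT isT); nia.
Qed.

Lemma staircase_common_pos f g : staircase f -> staircase g ->
  (forall a, \sum_b f a b = \sum_b g a b) -> (forall b, \sum_a f a b = \sum_a g a b) ->
  0 < \sum_a \sum_b f a b -> exists a0 b0, 0 < f a0 b0 /\ 0 < g a0 b0.
Proof.
move=> sf sg rowE colE /sumn_pos [a1 pos_a1].
case: (@arg_maxnP _ a1 (fun a => 0 < \sum_b f a b) (fun a : 'I_p => a : nat) pos_a1)
  => a0 pos_a0 a0_max.
have [b1 pos_b1] := sumn_pos pos_a0.
have pos_col : 0 < \sum_a f a b1 by rewrite (bigD1 a0) //= ltn_addr.
case: (@arg_minnP _ b1 (fun b => 0 < \sum_a f a b) (fun b : 'I_q => b : nat) pos_col)
  => b0 pos_b0 b0_min.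
exists a0, b0; split; first exact: staircase_corner.
apply: staircase_corner; rewrite // -?rowE -?colE //.
  by move=> a; rewrite -rowE; apply: a0_max.
by move=> b; rewrite -colE; apply: b0_min.
Qed.

Lemma staircase_margins_eq f g : staircase f -> staircase g ->
  (forall a, \sum_b f a b = \sum_b g a b) -> (forall b, \sum_a f a b = \sum_a g a b) ->
  f =2 g.
Proof.
have [M] := ubnP (\sum_a \sum_b f a b); elim: M f g => // M IH f g ltM sf sg rowE colE.
have [mass0|] := posnP (\sum_a \sum_b f a b).
  move=> a b; have row0 := sumn_eq0 mass0 a; move: (row0); rewrite rowE.
  by move=> /sumn_eq0 /(_ b) ->; rewrite (sumn_eq0 row0).
move=> mass_pos; have [a0 [b0 [f0 g0]]] := staircase_common_pos sf sg rowE colE mass_pos.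
pose delta (a : 'I_p) (b : 'I_q) : nat := (a == a0) && (b == b0).
have rowD h (h0 : 0 < h a0 b0) a : \sum_b (h a b - delta a b) = \sum_b h a b - (a == a0).
  by apply: sumn_subn_indicator => /eqP ->.
have colD h (h0 : 0 < h a0 b0) b : \sum_a (h a b - delta a b) = \sum_a h a b - (b == b0).
  by under eq_bigr do rewrite /delta andbC; apply: sumn_subn_indicator => /eqP ->.
have delta_le h (h0 : 0 < h a0 b0) a b : delta a b <= h a b.
  by rewrite /delta; case: eqP => [->|]; case: eqP => [->|].
have eq_rest : (fun a b => f a b - delta a b) =2 (fun a b => g a b - delta a b).
  apply: IH.
  - suff -> : \sum_a \sum_b (f a b - delta a b) = \sum_a \sum_b f a b - 1 by lia.
    under eq_bigr do rewrite rowD //.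
    by apply: (sumn_subn_indicator (F := fun a => \sum_b f a b) (c := true) (i0 := a0)) => _;
      rewrite (bigD1 b0) //= ltn_addr.
  - by apply: (staircase_le _ sf) => a b; apply: leq_subr.
  - by apply: (staircase_le _ sg) => a b; apply: leq_subr.
  - by move=> a; rewrite !rowD // rowE.
  - by move=> b; rewrite !colD // colE.
move=> a b; have := eq_rest a b; have := delta_le f f0 a b; have := delta_le g g0 a b.
by rewrite /=; lia.
Qed.

End Staircase.

(** * Maximal diagonal-free sets are unions of paths *)

Section Vertices.
Variables m n r : nat.
Hypothesis n_gt0 : 0 < n.
Local Notation P := (Pt m n r).
Implicit Types (v w z : P) (F : {set P}).

Definition row_idx v : nat := v.1.
Definition col_idx v : nat := v.2.
Definition block_idx v : nat := col_idx v %/ n.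
Definition inner_idx v : nat := col_idx v %% n.

(* In V the rows are ordered by (block, row), so a diagonal of a 2-minor of V
   with both entries in the same block is already a diagonal of a 2-minor of H. *)
Definition minor_diag v w : bool :=
  (row_idx v < row_idx w) && (col_idx v < col_idx w) ||
  (block_idx v < block_idx w) && (inner_idx v < inner_idx w).

Definition diag_free F : Prop := {in F &, forall v w, ~~ minor_diag v w}.

Definition point v : nat * nat := ((row_idx v).+1, (col_idx v).+1).

Lemma col_idxE v : col_idx v = block_idx v * n + inner_idx v.
Proof. exact: divn_eq. Qed.

Lemma inner_idx_lt v : inner_idx v < n.
Proof. by rewrite /inner_idx ltn_mod. Qed.

Lemma block_idx_lt v : block_idx v < r.
Proof. by rewrite /block_idx ltn_divLR //; apply: ltn_ord. Qed.

Lemma col_idx_ltn_block v w : block_idx v < block_idx w -> col_idx v < col_idx w.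
Proof.
move=> lt_b; rewrite !col_idxE; have := inner_idx_lt v.
have : (block_idx v).+1 * n <= block_idx w * n by rewrite leq_mul2r lt_b orbT.
lia.
Qed.

Lemma col_in_block v (k : nat) : k * n <= col_idx v < k * n + n ->
  block_idx v = k /\ inner_idx v = col_idx v - k * n.
Proof.
move=> /andP [lo hi]; have ev := col_idxE v; have lt_n := inner_idx_lt v.
have : block_idx v * n < k.+1 * n by rewrite mulSn; lia.
have : k * n < (block_idx v).+1 * n by rewrite mulSn; lia.
rewrite !ltn_mul2r n_gt0 /= => lt1 lt2.
have eb : block_idx v = k by lia.
by split=> //; rewrite ev eb; lia.
Qed.

Lemma vertex_eq v w : row_idx v = row_idx w -> col_idx v = col_idx w -> v = w.
Proof.
by case: v w => [i c] [i' c']; rewrite /row_idx /col_idx /= => /val_inj -> /val_inj ->.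
Qed.

Lemma point_onto x : in_P m n r x -> exists v, point v = x.
Proof.
case: x => x1 x2; rewrite /in_P /= => /and4P [? ? ? ?].
have l1 : x1.-1 < m by lia.
have l2 : x2.-1 < r * n by lia.
by exists (Ordinal l1, Ordinal l2); rewrite /point /row_idx /col_idx /=; congr pair; lia.
Qed.

Lemma is_path_ends S a b : is_path S a b ->
  exists va vb, [/\ va \in S, vb \in S, point va = a & point vb = b].
Proof.
case=> s [ins _ lst ->]; have bs : b \in a :: s by rewrite -lst mem_last.
have [va pa] := point_onto (allP ins a (mem_head _ _)).
have [vb pb] := point_onto (allP ins b bs).
by exists va, vb; rewrite !inE -/(point va) -/(point vb) pa pb eqxx.
Qed.

Definition descends (top : nat) (g : nat -> nat) : Prop :=
  [/\ g 0 = top, g r = 1 & forall k, k < r -> g k.+1 <= g k].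

Lemma descends_le top g k1 k2 : descends top g -> k1 <= k2 <= r -> g k2 <= g k1.
Proof.
case=> _ _ dec /andP []; elim: k2 => [|k2 IH]; first by rewrite leqn0 => /eqP ->.
rewrite leq_eqVlt ltnS => /orP [/eqP -> //| le1 le2].
exact: leq_trans (dec _ le2) (IH le1 (ltnW le2)).
Qed.

Lemma descends_bounds top g k : descends top g -> k <= r -> 1 <= g k <= top.
Proof.
move=> dg le_k; case: (dg) => g0 gr _; apply/andP; split.
  by rewrite -gr; apply: (descends_le dg); rewrite le_k leqnn.
by rewrite -[top]g0; apply: (descends_le dg).
Qed.

Definition path_family (g h : nat -> nat) (S : 'I_r -> {set P}) : Prop :=
  forall k : 'I_r, is_path (S k) (g k, k * n + h k.+1) (g k.+1, k * n + h k).

Definition path_union F : Prop :=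
  exists g h, descends m g /\ descends n h /\
    exists S, path_family g h S /\ F = \bigcup_(k < r) S k.

Section PathUnion.
Variables (g h : nat -> nat) (S : 'I_r -> {set P}).
Hypotheses (dg : descends m g) (dh : descends n h) (pS : path_family g h S).
Local Notation U := (\bigcup_(k < r) S k).

Lemma path_family_block (k : 'I_r) v : v \in S k ->
  [/\ g k.+1 <= (row_idx v).+1 <= g k, block_idx v = k
     & h k.+1 <= (inner_idx v).+1 <= h k].
Proof.
case: (pS k) => s [_ pth lst eS]; rewrite eS inE -/(point v) => /(path_in_rect pth).
rewrite lst /in_rect /northeast /= => /andP [/andP [? ?] /andP [? ?]].
have := descends_bounds dh (ltnW (ltn_ord k)); have := descends_bounds dh (ltn_ord k).
move=> /andP [? ?] /andP [? ?].
have [|bv iv] := @col_in_block v k; first by apply/andP; split; lia.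
by rewrite bv iv; split=> //; apply/andP; split; lia.
Qed.

Lemma path_family_start (k : 'I_r) : exists2 v, v \in S k &
  [/\ (row_idx v).+1 = g k, block_idx v = k & (inner_idx v).+1 = h k.+1].
Proof.
have [v [w [vS _ pv _]]] := is_path_ends (pS k); exists v => //.
have [_ bv _] := path_family_block vS; have := col_idxE v.
by case: pv => rowE colE; rewrite bv; split=> //; lia.
Qed.

Lemma path_family_end (k : 'I_r) : exists2 v, v \in S k &
  [/\ (row_idx v).+1 = g k.+1, block_idx v = k & (inner_idx v).+1 = h k].
Proof.
have [w [v [_ vS _ pv]]] := is_path_ends (pS k); exists v => //.
have [_ bv _] := path_family_block vS; have := col_idxE v.
by case: pv => rowE colE; rewrite bv; split=> //; lia.
Qed.

Lemma path_family_cross (k1 k2 : 'I_r) v w : k1 < k2 -> v \in S k1 -> w \in S k2 ->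
  ~~ minor_diag v w && ~~ minor_diag w v.
Proof.
move=> lt12 vS wS; have k12 : k1.+1 <= k2 <= r by rewrite lt12 ltnW.
have [/andP [? ?] bv /andP [? ?]] := path_family_block vS.
have [/andP [? ?] bw /andP [? ?]] := path_family_block wS.
have := descends_le dg k12; have := descends_le dh k12.
have : col_idx v < col_idx w by apply: col_idx_ltn_block; rewrite bv bw.
by rewrite /minor_diag bv bw; lia.
Qed.

Lemma path_union_diag_free : diag_free U.
Proof.
move=> v w /bigcupP [k1 _ vS] /bigcupP [k2 _ wS].
case: (ltngtP k1 k2) => [lt | lt | /val_inj eq_k].
- by case/andP: (path_family_cross lt vS wS).
- by case/andP: (path_family_cross lt wS vS).
subst k2; have [_ bv _] := path_family_block vS; have [_ bw _] := path_family_block wS.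
case: (pS k1) => s [_ pth _ eS]; move: vS wS; rewrite eS !inE -/(point v) -/(point w).
move=> /(path_comparable pth) /[apply].
by rewrite /ne_comparable /northeast /minor_diag bv bw /=; lia.
Qed.

Lemma path_family_diagonal (k : 'I_r) z : block_idx z = k ->
  g k.+1 <= (row_idx z).+1 <= g k -> h k.+1 <= (inner_idx z).+1 <= h k ->
  exists2 v, v \in S k & row_idx v + col_idx z = row_idx z + col_idx v.
Proof.
move=> bz /andP [? ?] /andP [? ?]; have := col_idxE z; rewrite bz => ez.
case: (pS k) => s [ins pth lst eS].
have [|x xs dx] := path_meets_diagonal
  (t := (g k - (row_idx z).+1) + ((col_idx z).+1 - (k * n + h k.+1))) pth.
  by rewrite lst /=; lia.
have [v pv] := point_onto (allP ins x xs).
exists v; first by rewrite eS inE -/(point v) pv.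
move: dx (path_in_rect pth xs); rewrite -pv lst /in_rect /northeast /point /=; lia.
Qed.

Lemma path_union_diag_before z :
  (g (block_idx z) < (row_idx z).+1) || (h (block_idx z) < (inner_idx z).+1) ->
  exists2 v, v \in U & minor_diag v z.
Proof.
set k := block_idx z => out; have [g0 _ _] := dg; have [h0 _ _] := dh.
have ez := col_idxE z; have iz := inner_idx_lt z; have rz : row_idx z < m := ltn_ord z.1.
have k_gt0 : 0 < k by case: posnP out => [->|//]; rewrite g0 h0; lia.
have kp_lt : k.-1 < r by have := block_idx_lt z; lia.
have kpE : (Ordinal kp_lt).+1 = k by rewrite /= prednK.
case/orP: out => out.
- have [v vS [rv bv _]] := path_family_end (Ordinal kp_lt).
  exists v; first by apply/bigcupP; exists (Ordinal kp_lt).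
  have : col_idx v < col_idx z by apply: col_idx_ltn_block; rewrite bv /=; lia.
  by move: rv; rewrite kpE /minor_diag; lia.
- have [v vS [_ bv iv]] := path_family_start (Ordinal kp_lt).
  exists v; first by apply/bigcupP; exists (Ordinal kp_lt).
  by move: iv; rewrite kpE /minor_diag bv /=; lia.
Qed.

Lemma path_union_diag_after z :
  ((row_idx z).+1 < g (block_idx z).+1) || ((inner_idx z).+1 < h (block_idx z).+1) ->
  exists2 v, v \in U & minor_diag z v.
Proof.
set k := block_idx z => out; have [_ gr _] := dg; have [_ hr _] := dh.
have ks_lt : k.+1 < r.
  rewrite ltn_neqAle block_idx_lt andbT.
  by apply: contraTneq out => ->; rewrite gr hr; lia.
case/orP: out => out.
- have [v vS [rv bv _]] := path_family_start (Ordinal ks_lt).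
  exists v; first by apply/bigcupP; exists (Ordinal ks_lt).
  have : col_idx z < col_idx v by apply: col_idx_ltn_block; rewrite bv.
  by move: rv; rewrite /minor_diag bv /=; lia.
- have [v vS [_ bv iv]] := path_family_end (Ordinal ks_lt).
  exists v; first by apply/bigcupP; exists (Ordinal ks_lt).
  by move: iv; rewrite /minor_diag bv /=; lia.
Qed.

Lemma path_union_maximal z : z \notin U ->
  exists2 v, v \in U & minor_diag v z || minor_diag z v.
Proof.
move=> zU; pose k := Ordinal (block_idx_lt z).
have [/path_union_diag_before [v vU d] | ] :=
  boolP ((g k < (row_idx z).+1) || (h k < (inner_idx z).+1)).
  by exists v; rewrite ?d.
have [/path_union_diag_after [v vU d] | ] :=
  boolP (((row_idx z).+1 < g k.+1) || ((inner_idx z).+1 < h k.+1)).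
  by exists v; rewrite ?d ?orbT.
rewrite !negb_or -!leqNgt => /andP [le_g le_h] /andP [g_le h_le].
have rz : g k.+1 <= (row_idx z).+1 <= g k by rewrite g_le le_g.
have iz : h k.+1 <= (inner_idx z).+1 <= h k by rewrite h_le le_h.
have [v vS dv] := @path_family_diagonal k z (erefl _) rz iz.
exists v; first by apply/bigcupP; exists k.
have [_ bv _] := path_family_block vS.
case: (ltngtP (row_idx v) (row_idx z)) => [lt | gt | eq_r].
- by apply/orP; left; rewrite /minor_diag lt /=; lia.
- by apply/orP; right; rewrite /minor_diag gt /=; lia.
have eq_vz : v = z by apply: vertex_eq => //; lia.
by move: zU; rewrite -eq_vz => /negP; case; apply/bigcupP; exists k.
Qed.

End PathUnion.

Section MaximalDiagFree.
Hypothesis r_gt0 : 0 < r.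
Variable F : {set P}.
Hypothesis F_free : diag_free F.

(* The corners [g_k] (for [c := row_idx]) and [h_k] (for [c := inner_idx]) of
   the paths covering [F]. *)
Definition block_profile (c : P -> nat) (top k : nat) : nat :=
  if k == 0 then top else maxn 1 (\max_(v in F | k <= block_idx v) (c v).+1).

Lemma block_profile_descends c top : 0 < top -> (forall v, c v < top) ->
  descends top (block_profile c top).
Proof.
move=> top_gt0 c_lt; split; rewrite /block_profile ?eqxx //.
  rewrite (negbTE (lt0n_neq0 r_gt0)) big_pred0 // => v.
  by rewrite leqNgt block_idx_lt andbF.
have max_le k : \max_(v in F | k <= block_idx v) (c v).+1 <= top by apply/bigmax_leqP.
move=> [_|k _] /=; first by rewrite geq_max max_le top_gt0.
rewrite geq_max leq_maxl /= leq_max; apply/orP; right.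
apply/bigmax_leqP => v /andP [vF kv]; apply: leq_bigmax_cond; rewrite vF; lia.
Qed.

Lemma block_profile_ge c top v : v \in F -> c v < top ->
  (c v).+1 <= block_profile c top (block_idx v).
Proof.
move=> vF lt_top; rewrite /block_profile; case: eqP => // _.
by rewrite leq_max; apply/orP; right; apply: leq_bigmax_cond; rewrite vF /=.
Qed.

Lemma block_profile_succ_le c top v : v \in F ->
  (forall w, w \in F -> block_idx v < block_idx w -> c w <= c v) ->
  block_profile c top (block_idx v).+1 <= (c v).+1.
Proof.
move=> vF c_le; rewrite /block_profile /= geq_max /=.
by apply/bigmax_leqP => w /andP [wF vw]; apply: c_le.
Qed.

Lemma diag_free_later_block v w : v \in F -> w \in F -> block_idx v < block_idx w ->
  row_idx w <= row_idx v /\ inner_idx w <= inner_idx v.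
Proof.
move=> vF wF lt_b; have := F_free vF wF; have := col_idx_ltn_block lt_b.
by rewrite /minor_diag lt_b; lia.
Qed.

Lemma diag_free_comparable v w : v \in F -> w \in F -> ne_comparable (point v) (point w).
Proof.
move=> vF wF; have := F_free vF wF; have := F_free wF vF.
by rewrite /minor_diag /ne_comparable /northeast /=; lia.
Qed.

Hypothesis m_gt0 : 0 < m.
Local Notation gF := (block_profile row_idx m).
Local Notation hF := (block_profile inner_idx n).

Lemma diag_free_descends : descends m gF /\ descends n hF.
Proof.
by split; apply: block_profile_descends => // v; [apply: ltn_ord | apply: inner_idx_lt].
Qed.

Lemma diag_free_block_path (k : 'I_r) : exists s,
  let a := (gF k, k * n + hF k.+1) in
  [/\ path step a s, last a s = (gF k.+1, k * n + hF k), all (in_P m n r) (a :: s)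
     & {in F, forall v, block_idx v = k -> point v \in a :: s}].
Proof.
have [dg dh] := diag_free_descends.
have k_le : k <= k.+1 <= r by rewrite leqnSn ltn_ord.
have g_le := descends_le dg k_le; have h_le := descends_le dh k_le.
have /andP [g1 g2] := descends_bounds dg (ltnW (ltn_ord k)).
have /andP [h1 h2] := descends_bounds dh (ltnW (ltn_ord k)).
have /andP [g1' g2'] := descends_bounds dg (ltn_ord k).
have /andP [h1' h2'] := descends_bounds dh (ltn_ord k).
pose cs := [seq point v | v <- enum [set v in F | block_idx v == k]].
have [|||s [pth lst sub]] :=
  @chain_sub_path (gF k, k * n + hF k.+1) (gF k.+1, k * n + hF k) cs.
- by rewrite /northeast /=; lia.
- apply/allP => x /mapP [v]; rewrite mem_enum inE => /andP [vF /eqP bv] ->.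
  have later w : w \in F -> block_idx v < block_idx w -> _ := diag_free_later_block vF.
  have := block_profile_ge (c := row_idx) vF (ltn_ord v.1).
  have := block_profile_ge (c := inner_idx) vF (inner_idx_lt v).
  have := block_profile_succ_le (c := row_idx) m vF (fun w wF lt => (later w wF lt).1).
  have := block_profile_succ_le (c := inner_idx) n vF (fun w wF lt => (later w wF lt).2).
  by have := col_idxE v; rewrite bv /in_rect /northeast /point /=; lia.
- move=> x y /mapP [v]; rewrite mem_enum inE => /andP [vF _] ->.
  move=> /mapP [w]; rewrite mem_enum inE => /andP [wF _] ->.
  exact: diag_free_comparable.
exists s; split=> //.
- apply/allP => x /(path_in_rect pth); rewrite lst /in_rect /northeast /in_P /=.
  have : k.+1 * n <= r * n by rewrite leq_mul2r ltn_ord orbT.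
  by rewrite mulSn; lia.
- move=> v vF bv; apply: sub; apply/mapP; exists v => //.
  by rewrite mem_enum inE vF bv eqxx.
Qed.

Lemma diag_free_path_family : exists S,
  path_family gF hF S /\ F \subset \bigcup_(k < r) S k.
Proof.
have [sf hsf] := fin_all_exists diag_free_block_path.
exists (fun k : 'I_r => [set v | point v \in (gF k, k * n + hF k.+1) :: sf k]); split.
  by move=> k; have [pth lst ins _] := hsf k; exists (sf k).
apply/subsetP => v vF; apply/bigcupP; exists (Ordinal (block_idx_lt v)) => //.
by have [_ _ _ sub] := hsf (Ordinal (block_idx_lt v)); rewrite inE sub.
Qed.

End MaximalDiagFree.

Lemma maximal_diag_free_path_union F : 0 < m -> 0 < r ->
  (diag_free F /\ forall G, diag_free G -> F \subset G -> G = F) <-> path_union F.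
Proof.
move=> m_gt0 r_gt0; split=> [[F_free F_max] | [g [h [dg [dh [S [pS ->]]]]]]].
  have [dg dh] := diag_free_descends r_gt0 F m_gt0.
  have [S [pS sub]] := diag_free_path_family r_gt0 F_free m_gt0.
  exists (block_profile F row_idx m), (block_profile F inner_idx n); do 2!split=> //.
  by exists S; split=> //; apply/esym/F_max => //; apply: path_union_diag_free dh pS.
split=> [|G G_free sub]; first exact: path_union_diag_free dh pS.
apply/eqP; rewrite eqEsubset sub andbT; apply/subsetP => z zG; apply/negPn/negP => zU.
have [v vU /orP [] d] := path_union_maximal dg dh pS zU; have vG := subsetP sub v vU.
- by move/negP: (G_free v z vG zG).
- by move/negP: (G_free z v zG vG).
Qed.

End Vertices.

(** * Standard monomials *)

Lemma rearrangement_lt x1 x2 y1 y2 : x1 < x2 -> y1 < y2 ->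
  x1 * y2 + x2 * y1 < x1 * y1 + x2 * y2.
Proof.
move=> lt_x lt_y; have : 0 < (x2 - x1) * (y2 - y1) by rewrite muln_gt0 !subn_gt0 lt_x.
by rewrite mulnBl !mulnBr; nia.
Qed.

Lemma sum_indicator (I : finType) (i0 : I) (F : I -> nat) : \sum_i (i == i0) * F i = F i0.
Proof. by rewrite (bigD1 i0) //= eqxx mul1n big1 ?addn0 // => i /negbTE ->. Qed.

Section Monomials.
Variables (m n r : nat).
Hypothesis n_gt0 : 0 < n.
Local Notation P := (Pt m n r).
Local Notation N := (NV m n r).
Implicit Types (v w : P) (u x y z : 'X_{1..N}).

Definition monom v : 'X_{1..N} := U_(enum_rank v)%MM.

Definition mweight (f : P -> nat) u : nat := \sum_v f v * u (enum_rank v).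

Lemma mweightD f x y : mweight f (x + y)%MM = mweight f x + mweight f y.
Proof. by rewrite /mweight -big_split; apply: eq_bigr => v _; rewrite mnmDE mulnDr. Qed.

Lemma mweight_monom f v : mweight f (monom v) = f v.
Proof.
rewrite /mweight (bigD1 v) //= big1 ?addn0 => [|w /negbTE wv].
  by rewrite mnm1E eqxx muln1.
by rewrite mnm1E (inj_eq enum_rank_inj) eq_sym wv muln0.
Qed.

Lemma col_block_lt (c : 'I_(r * n)) : c %/ n < r.
Proof. by rewrite ltn_divLR. Qed.

Definition col_block (c : 'I_(r * n)) : 'I_r := Ordinal (col_block_lt c).
Definition col_inner (c : 'I_(r * n)) : 'I_n := Ordinal (ltn_pmod c n_gt0).

Lemma colidx_split c : colidx (col_block c) (col_inner c) = c.
Proof. by apply: val_inj; rewrite /= -divn_eq. Qed.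

Lemma col_block_colidx k j : col_block (colidx k j) = k.
Proof. by apply: val_inj; rewrite /= divnMDl // divn_small // addn0. Qed.

Lemma col_inner_colidx k j : col_inner (colidx k j) = j.
Proof. by apply: val_inj; rewrite /= modnMDl modn_small. Qed.

Lemma block_idx_colidx (i : 'I_m) k j : block_idx ((i, colidx k j) : P) = k.
Proof. by rewrite -[RHS](congr1 val (col_block_colidx k j)). Qed.

Lemma inner_idx_colidx (i : 'I_m) k j : inner_idx ((i, colidx k j) : P) = j.
Proof. by rewrite -[RHS](congr1 val (col_inner_colidx k j)). Qed.

Lemma sum_colidx (F : 'I_(r * n) -> nat) :
  \sum_c F c = \sum_(k < r) \sum_(j < n) F (colidx k j).
Proof.
rewrite pair_big /= (reindex (fun kj : 'I_r * 'I_n => colidx kj.1 kj.2)) //=.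
exists (fun c => (col_block c, col_inner c)) => [[k j] _ | c _] /=.
  by rewrite col_block_colidx col_inner_colidx.
exact: colidx_split.
Qed.

Lemma mweight_coord (f : 'I_m -> 'I_r -> 'I_n -> nat) u :
  mweight (fun v => f v.1 (col_block v.2) (col_inner v.2)) u =
  \sum_(i < m) \sum_(k < r) \sum_(j < n) f i k j * u (enum_rank (i, colidx k j)).
Proof.
transitivity (\sum_(i < m) \sum_c f i (col_block c) (col_inner c) * u (enum_rank (i, c))).
  by rewrite pair_big; apply: eq_bigr => -[i c].
apply: eq_bigr => i _; rewrite (sum_colidx (fun c => f i _ _ * _)).
by under eq_bigr do under eq_bigr do rewrite col_block_colidx col_inner_colidx.
Qed.

(* The 2-minors of H and V are homogeneous for the grading by total degree and
   by the number of factors in each row, each block and each column of a block. *)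
Definition grade_attr (t : 'I_m + 'I_r + 'I_n) v : nat :=
  match t with
  | inl (inl i) => v.1 == i
  | inl (inr k) => col_block v.2 == k
  | inr j => col_inner v.2 == j
  end.

Definition grade u := (mdeg u, [ffun t => mweight (grade_attr t) u]).

Lemma grade_addl z x y : grade x = grade y -> grade (z + x)%MM = grade (z + y)%MM.
Proof.
case=> dxy /ffunP exy; rewrite /grade !mdegD dxy; congr pair; apply/ffunP => t.
by have := exy t; rewrite !ffunE !mweightD => ->.
Qed.

Definition block_matrix u (k : 'I_r) (j : 'I_n) : nat :=
  \sum_(i < m) u (enum_rank (i, colidx k j)).

Lemma grade_row u i : mweight (grade_attr (inl (inl i))) u = \sum_c u (enum_rank (i, c)).
Proof.
rewrite (mweight_coord (fun i' _ _ => i' == i)) sum_colidx exchange_big /=.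
under eq_bigr do rewrite exchange_big.
by under eq_bigr do under eq_bigr do rewrite sum_indicator.
Qed.

Lemma grade_block u k : mweight (grade_attr (inl (inr k))) u = \sum_j block_matrix u k j.
Proof.
rewrite (mweight_coord (fun _ k' _ => k' == k)) /block_matrix [RHS]exchange_big /=.
under eq_bigr do rewrite exchange_big.
by under eq_bigr do under eq_bigr do rewrite sum_indicator.
Qed.

Lemma grade_inner u j : mweight (grade_attr (inr j)) u = \sum_k block_matrix u k j.
Proof.
rewrite (mweight_coord (fun _ _ j' => j' == j)) /block_matrix exchange_big /=.
by under eq_bigr do under eq_bigr do rewrite sum_indicator.
Qed.

(* Trading the diagonal of a 2-minor of H for its antidiagonal lowers
   [row * col] (rearrangement inequality); for V the same holds for
   [inner * (block * m + row)], [block * m + row] being the row index in V. *)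
Definition potential v : nat :=
  row_idx v * col_idx v + m * (block_idx v * inner_idx v).

Lemma potentialE v : potential v =
  row_idx v * block_idx v * n + inner_idx v * (block_idx v * m + row_idx v).
Proof. rewrite /potential col_idxE; nia. Qed.

Definition lower_swap a b a' b' : Prop :=
  [/\ a'.1 = a.1, b'.1 = b.1,
      col_block a'.2 = col_block a.2 /\ col_block b'.2 = col_block b.2 \/
      col_block a'.2 = col_block b.2 /\ col_block b'.2 = col_block a.2,
      col_inner a'.2 = col_inner a.2 /\ col_inner b'.2 = col_inner b.2 \/
      col_inner a'.2 = col_inner b.2 /\ col_inner b'.2 = col_inner a.2
    & potential a' + potential b' < potential a + potential b].

Lemma lower_swap_grade a b a' b' : lower_swap a b a' b' ->
  grade (monom a + monom b)%MM = grade (monom a' + monom b')%MM.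
Proof.
case=> ra rb eb ei _; rewrite /grade !mdegD !mdeg1; congr pair; apply/ffunP => t.
rewrite !ffunE !mweightD !mweight_monom; case: t => [[i|k]|j] /=; first by rewrite ra rb.
  by case: eb => -[-> ->] //; rewrite addnC.
by case: ei => -[-> ->] //; rewrite addnC.
Qed.

Lemma lower_swap_potential a b a' b' : lower_swap a b a' b' ->
  mweight potential (monom a' + monom b') < mweight potential (monom a + monom b).
Proof. by case=> *; rewrite !mweightD !mweight_monom. Qed.

Lemma lower_swapH (i1 i2 : 'I_m) (c1 c2 : 'I_(r * n)) : i1 < i2 -> c1 < c2 ->
  lower_swap (i1, c1) (i2, c2) (i1, c2) (i2, c1).
Proof.
move=> lt_i lt_c; split=> //; [by right | by right |].
have := rearrangement_lt lt_i lt_c.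
by rewrite /potential /block_idx /inner_idx /row_idx /col_idx /=; lia.
Qed.

Lemma lower_swapV (i1 i2 : 'I_m) (k1 k2 : 'I_r) (j1 j2 : 'I_n) :
  j1 < j2 -> k1 * m + i1 < k2 * m + i2 ->
  lower_swap (i1, colidx k1 j1) (i2, colidx k2 j2) (i1, colidx k1 j2) (i2, colidx k2 j1).
Proof.
move=> lt_j lt_V; split=> //=; rewrite ?col_block_colidx ?col_inner_colidx;
  [by left | by right |].
have := rearrangement_lt lt_j lt_V.
by rewrite !potentialE !block_idx_colidx !inner_idx_colidx /row_idx /=; lia.
Qed.

End Monomials.

Section InitialIdeal.
Variables (K : fieldType) (m n r : nat).
Hypothesis n_gt0 : 0 < n.
Variable le : rel 'X_{1..NV m n r}.
Hypothesis le_diag : @diagonal K m n r le.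
Local Notation P := (Pt m n r).
Local Notation N := (NV m n r).
Local Notation var := (@var K m n r).
Local Notation monom := (@monom m n r).
Local Notation grade := (grade n_gt0).
Local Notation lower_swap := (lower_swap n_gt0).
Local Notation grade_attr := (grade_attr n_gt0).
Local Notation potential := (@potential m n r).
Local Notation block_matrix := (@block_matrix m n r).
Implicit Types (a b v : P) (u w x y z : 'X_{1..N}) (F : {set P}).

Lemma var_monom v : var v = 'X_[monom v].
Proof. by []. Qed.

Lemma minor_lower_swap g d : @is_H_minor K m n r g d \/ @is_V_minor K m n r g d ->
  exists a b a' b',
    [/\ lower_swap a b a' b', g = (var a * var b - var a' * var b')%R
       & d = (var a * var b)%R].
Proof.
case=> [[i1 [i2 [c1 [c2 [lt_i lt_c -> ->]]]]] |
        [[k1 i1] [[k2 i2] [j1 [j2 [lt_V lt_j -> ->]]]]]].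
  by exists (i1, c1), (i2, c2), (i1, c2), (i2, c1); split=> //; apply: lower_swapH.
exists (i1, colidx k1 j1), (i2, colidx k2 j2), (i1, colidx k1 j2), (i2, colidx k2 j1).
by split=> //; apply: lower_swapV.
Qed.

Lemma minor_diag_minor a b : minor_diag a b -> exists a' b',
  let g := (var a * var b - var a' * var b')%R in
  lower_swap a b a' b' /\ (@is_H_minor K m n r g (var a * var b)%R \/
                               @is_V_minor K m n r g (var a * var b)%R).
Proof.
case: a b => [ia ca] [ib cb] /orP [/andP [lt_i lt_c] | /andP [lt_k lt_j]].
  exists (ia, cb), (ib, ca); split; first exact: lower_swapH.
  by left; exists ia, ib, ca, cb.
rewrite -[ca](colidx_split n_gt0) -[cb](colidx_split n_gt0) in lt_k lt_j *.
move: lt_k lt_j; set ka := col_block _ _; set ja := col_inner _ _.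
set kb := col_block _ _; set jb := col_inner _ _.
rewrite !(block_idx_colidx n_gt0) !(inner_idx_colidx n_gt0) => lt_k lt_j.
have lt_V : ka * m + ia < kb * m + ib.
  have : ka.+1 * m <= kb * m by rewrite leq_mul2r lt_k orbT.
  by have := ltn_ord ia; rewrite mulSn; lia.
exists (ia, colidx ka jb), (ib, colidx kb ja); split; first exact: lower_swapV.
by right; exists (ka, ia), (kb, ib), ja, jb.
Qed.

Lemma lower_swap_le a b a' b' : lower_swap a b a' b' ->
  lead_term_is le (var a * var b - var a' * var b')%R (var a * var b)%R ->
  le (monom a' + monom b')%MM (monom a + monom b)%MM.
Proof.
move=> sw; rewrite !var_monom -!mpolyXD.
set D := (monom a + monom b)%MM; set A := (monom a' + monom b')%MM.
have nDA : D != A.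
  by apply/eqP => eDA; have := lower_swap_potential sw; rewrite -/D -/A eDA ltnn.
case=> u [[_ u_max] eD]; have uD : u = D.
  have := congr1 (mcoeff D) eD; rewrite mcoeffZ !mcoeffX eqxx.
  by case: eqP => // _; rewrite mulr0 => /eqP; rewrite oner_eq0.
rewrite -uD; apply: u_max; rewrite mcoeff_msupp mcoeffB !mcoeffX eqxx (negbTE nDA).
by rewrite sub0r oppr_eq0 oner_eq0.
Qed.

Definition standard u : bool :=
  [forall a, forall b, minor_diag a b ==> (u (enum_rank a) * u (enum_rank b) == 0)].

Lemma standardP u : reflect
  (forall a b, minor_diag a b -> u (enum_rank a) * u (enum_rank b) = 0) (standard u).
Proof.
apply: (iffP forallP) => [su a b ab | su a]; last first.
  by apply/forallP => b; apply/implyP => /su ->.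
by have /forallP /(_ b) /implyP /(_ ab) /eqP := su a.
Qed.

Lemma minor_diag_neq a b : minor_diag a b -> a != b.
Proof. by apply: contraTneq => ->; rewrite /minor_diag !ltnn. Qed.

Lemma monom_pair_le a b u : a != b ->
  (monom a + monom b <= u)%MM = (0 < u (enum_rank a)) && (0 < u (enum_rank b)).
Proof.
move=> ab; have ab' : enum_rank a != enum_rank b by rewrite (inj_eq enum_rank_inj).
apply/mnm_lepP/andP => [le_u | [ua ub] t]; last first.
  rewrite mnmDE !mnm1E; case: (eqVneq (enum_rank a) t) => [<-|_].
    by rewrite eq_sym (negbTE ab') addn0.
  by case: eqP => [<-|_].
have := le_u (enum_rank a); have := le_u (enum_rank b).
by rewrite !mnmDE !mnm1E !eqxx (negbTE ab') eq_sym (negbTE ab') /=; lia.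
Qed.

Lemma nonstandard_pair u : ~~ standard u ->
  exists a b, minor_diag a b && (monom a + monom b <= u)%MM.
Proof.
rewrite negb_forall => /existsP [a]; rewrite negb_forall => /existsP [b].
rewrite negb_imply => /andP [ab nz]; exists a, b.
by rewrite ab monom_pair_le ?minor_diag_neq //= !lt0n -negb_or -muln_eq0.
Qed.

Lemma standard_staircase_H u : standard u ->
  staircase (fun (i : 'I_m) (c : 'I_(r * n)) => u (enum_rank (i, c))).
Proof.
by move=> /standardP su i1 i2 c1 c2 lt_i lt_c; apply: su; rewrite /minor_diag lt_i lt_c.
Qed.

Lemma standard_staircase_block u : standard u -> staircase (block_matrix u).
Proof.
move=> /standardP su k1 k2 j1 j2 lt_k lt_j; apply/eqP; rewrite muln_eq0.
apply/negPn/negP; rewrite negb_or -!lt0n => /andP [/sumn_pos [i1 p1] /sumn_pos [i2 p2]].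
have := su (i1, colidx k1 j1) (i2, colidx k2 j2).
rewrite /minor_diag !(block_idx_colidx n_gt0) !(inner_idx_colidx n_gt0) lt_k lt_j orbT.
by move=> /(_ isT) /eqP; rewrite muln_eq0 -!leqn0 leqNgt p1 leqNgt p2.
Qed.

Lemma standard_grade_inj u w : standard u -> standard w -> grade u = grade w -> u = w.
Proof.
move=> su sw [_ /ffunP eg].
have deg t : mweight (grade_attr t) u = mweight (grade_attr t) w.
  by have := eg t; rewrite !ffunE.
have eB : block_matrix u =2 block_matrix w.
  apply: (staircase_margins_eq (standard_staircase_block su) (standard_staircase_block sw))
    => [k | j]; [rewrite -!grade_block | rewrite -!grade_inner]; exact: deg.
have eH : forall i c, u (enum_rank (i, c)) = w (enum_rank (i, c)).
  apply: (staircase_margins_eq (standard_staircase_H su) (standard_staircase_H sw)) => [i | c].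
    by rewrite -!grade_row; exact: deg.
  by have := eB (col_block n_gt0 c) (col_inner n_gt0 c); rewrite /block_matrix colidx_split.
by apply/mnmP => t; rewrite -(enum_valK t); case: (enum_val t).
Qed.

Lemma nonstandard_reduce w : ~~ standard w ->
  exists w', [/\ grade w' = grade w, mweight potential w' < mweight potential w & le w' w].
Proof.
case: le_diag => [[_ [_ le_addr]] lead_diag] /nonstandard_pair [a [b /andP [ab le_w]]].
have [a' [b' [sw minor]]] := minor_diag_minor ab.
have le_AD := lower_swap_le sw (lead_diag _ _ minor).
set D := (monom a + monom b)%MM in le_w le_AD; set A := (monom a' + monom b')%MM in le_AD.
have wE : w = (w - D + D)%MM by rewrite submK.
exists (w - D + A)%MM; split.
- by rewrite [in RHS]wE; apply: grade_addl; rewrite (lower_swap_grade sw).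
- rewrite [in X in _ < X]wE !(mweightD _ (w - D)%MM) ltn_add2l.
  exact: lower_swap_potential sw.
- by rewrite [in X in le _ X]wE !(addmC (w - D)%MM); apply: le_addr.
Qed.

Lemma standard_min u : standard u -> forall w, grade w = grade u -> le u w.
Proof.
case: le_diag => [[[le_refl _ le_trans _] _] _] su w.
have [M] := ubnP (mweight potential w); elim: M w => // M IH w lt_M gw.
have [sw | nsw] := boolP (standard w); first by rewrite (standard_grade_inj sw su gw).
have [w' [gw' lt_w' le_w']] := nonstandard_reduce nsw.
by apply: le_trans le_w'; apply: IH; [lia | rewrite gw'].
Qed.

Local Open Scope ring_scope.

Lemma mcoeffMX_sum (q : {mpoly K[N]}) x w :
  (q * 'X_[x])@_w = \sum_(v <- msupp q) q@_v * ((v + x)%MM == w)%:R.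
Proof.
rewrite {1}(mpolyE q) mulr_suml raddf_sum /=; apply: eq_bigr => v _.
by rewrite -scalerAl -mpolyXD mcoeffZ mcoeffX.
Qed.

Lemma mcoeffMX_eq0 (q : {mpoly K[N]}) x w : ~~ (x <= w)%MM -> (q * 'X_[x])@_w = 0.
Proof.
move=> nx; rewrite mcoeffMX_sum big1 // => v _; case: eqP => [e|]; last by rewrite mulr0.
by move: nx; rewrite -e lem_addl.
Qed.

(* Sum of the coefficients of [q] over the (finite) grade class of [u]; it
   vanishes on [Imnr] because the 2-minors are differences of monomials of the
   same grade. *)
Definition grade_class_sum u (q : {mpoly K[N]}) : K :=
  \sum_(w : 'X_{1..N < (mdeg u).+1}) (grade w == grade u)%:R * q@_w.

Lemma grade_class_sumB u q1 q2 :
  grade_class_sum u (q1 - q2) = grade_class_sum u q1 - grade_class_sum u q2.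
Proof.
by rewrite /grade_class_sum -sumrB; apply: eq_bigr => w _; rewrite mcoeffB mulrBr.
Qed.

Lemma grade_class_sum_sum u (T : Type) (s : seq T) (F : T -> {mpoly K[N]}) :
  grade_class_sum u (\sum_(x <- s) F x) = \sum_(x <- s) grade_class_sum u (F x).
Proof.
rewrite /grade_class_sum; under eq_bigr do rewrite raddf_sum mulr_sumr.
exact: exchange_big.
Qed.

Lemma grade_class_sum_mulX u q x :
  grade_class_sum u (q * 'X_[x]) =
  \sum_(v <- msupp q) q@_v * (grade (v + x)%MM == grade u)%:R.
Proof.
have class1 y : \sum_(w : 'X_{1..N < (mdeg u).+1})
    (grade w == grade u)%:R * ((y == val w)%:R : K) = (grade y == grade u)%:R.
  case: (eqVneq (grade y) (grade u)) => [gy | ngy]; last first.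
    rewrite big1 // => w _; case: (eqVneq y (val w)) => [yw|_]; last by rewrite mulr0.
    by rewrite -yw (negbTE ngy) mul0r.
  have dy : (mdeg y < (mdeg u).+1)%N by move: (congr1 fst gy) => /= ->.
  rewrite (bigD1 (BMultinom dy)) //= gy !eqxx mulr1 big1 ?addr0 // => w nw.
  case: (eqVneq y (val w)) => [yw|_]; last by rewrite mulr0.
  by case/eqP: nw; apply: val_inj; rewrite /= yw.
rewrite /grade_class_sum; under eq_bigr do rewrite mcoeffMX_sum mulr_sumr.
rewrite exchange_big /=; apply: eq_bigr => v _.
by rewrite -class1 mulr_sumr; apply: eq_bigr => w _; rewrite mulrCA.
Qed.

Lemma grade_class_sum_Imnr u p : @Imnr K m n r p -> grade_class_sum u p = 0.
Proof.
case=> s [gen ->]; rewrite grade_class_sum_sum big_seq big1 // => -[q g] /gen [d] /=.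
case/minor_lower_swap => a [b [a' [b' [sw -> _]]]].
rewrite !var_monom -!mpolyXD mulrBr grade_class_sumB !grade_class_sum_mulX -sumrB.
rewrite big1 // => v _.
by rewrite (grade_addl v (lower_swap_grade sw)) subrr.
Qed.

Lemma lead_Imnr_nonstandard p u : @Imnr K m n r p -> is_lead le p u -> ~~ standard u.
Proof.
case: le_diag => [[[_ le_anti _ _] _] _] Ip [u_supp u_max]; apply/negP => su.
suff : grade_class_sum u p = p@_u.
  by rewrite grade_class_sum_Imnr // => /esym/eqP; apply/negP; rewrite -mcoeff_msupp.
rewrite /grade_class_sum (bigD1 (BMultinom (ltnSn (mdeg u)))) //= eqxx mul1r.
rewrite big1 ?addr0 // => w nw; case: eqP => [gw | _]; last by rewrite mul0r.
rewrite memN_msupp_eq0 ?mulr0 //; apply: contra nw => w_supp; apply/eqP/val_inj/le_anti.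
by rewrite /= u_max // standard_min.
Qed.

Lemma standard_le u w : (u <= w)%MM -> standard w -> standard u.
Proof.
move=> /mnm_lepP le_uw /standardP sw; apply/standardP => a b /sw /eqP.
rewrite !muln_eq0 => /orP [] /eqP w0; apply/eqP; rewrite muln_eq0.
  by have := le_uw (enum_rank a); rewrite w0 leqn0 => ->.
by have := le_uw (enum_rank b); rewrite w0 leqn0 => ->; rewrite orbT.
Qed.

Definition face_monom (F : {set P}) : 'X_{1..N} := (\big[+%MM/0%MM]_(v in F) monom v)%MM.

Lemma prod_var_face_monom F : \prod_(v in F) var v = 'X_[face_monom F].
Proof. exact: mprodXE. Qed.

Lemma face_monomE F v : face_monom F (enum_rank v) = (v \in F).
Proof.
rewrite /face_monom mnm_sumE (eq_bigr (fun a => nat_of_bool (a == v))) => [|a _];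
  last first.
  by rewrite mnm1E (inj_eq enum_rank_inj).
case: (boolP (v \in F)) => vF; last first.
  by rewrite big1 // => a aF; apply/eqP; rewrite eqb0; apply: contraNneq vF => <-.
by rewrite (bigD1 v) //= eqxx big1 // => a /andP [_ /negbTE ->].
Qed.

Lemma face_monom_standard F : diag_free F -> standard (face_monom F).
Proof.
move=> F_free; apply/standardP => a b ab; rewrite !face_monomE; apply/eqP.
rewrite muln_eq0 !eqb0; apply: contraTT ab => /norP [/negPn aF /negPn bF].
exact: F_free.
Qed.

Lemma SR_face_initial F :
  @SR_face K m n r (initial_ideal le (@Imnr K m n r)) F <-> diag_free F.
Proof.
case: le_diag => [_ lead_diag]; split=> [face v w vF wF | F_free [s [gen eF]]].
  apply/negP => vw; apply: face; have [a' [b' [_ minor]]] := minor_diag_minor vw.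
  have [u0 [[u0_supp _] _]] := lead_diag _ _ minor.
  exists [:: (\prod_(x | (x \in F) && (x != v) && (x != w)) var x, var v * var w)].
  split=> [_ /[!inE] /eqP -> /= | ].
    exists (var v * var w - var a' * var b'); split; last exact: lead_diag _ _ minor.
      by exists [:: (1, var v * var w - var a' * var b')]; split=> [_ /[!inE] /eqP -> | ];
        [exists (var v * var w) | rewrite big_seq1 mul1r].
    by apply: contraTneq u0_supp => ->; rewrite msupp0.
  rewrite big_seq1 (bigD1 v) //= (bigD1 w) /=; last by rewrite wF eq_sym minor_diag_neq.
  by rewrite mulrA mulrC.
have : (\prod_(v in F) var v)@_(face_monom F) = 1.
  by rewrite prod_var_face_monom mcoeffX eqxx.
rewrite eF raddf_sum big_seq big1 => [/eqP | [q t] /gen [p [Ip _ [u [lead_u ->]]]]].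
  by rewrite eq_sym oner_eq0.
rewrite /= -scalerAr mcoeffZ mcoeffMX_eq0 ?mulr0 //; apply/negP => le_u.
by have /negP := lead_Imnr_nonstandard Ip lead_u; apply; apply: standard_le le_u _;
  apply: face_monom_standard.
Qed.

End InitialIdeal.

Theorem theorem5p4 (K : fieldType) (m n r : nat)
  (hm : (0 < m)%N) (hn : (0 < n)%N) (hr : (0 < r)%N)
  (le : rel 'X_{1..NV m n r}) (hdiag : @diagonal K m n r le)
  (F : {set Pt m n r}) :
  @SR_facet K m n r (@initial_ideal K m n r le (@Imnr K m n r)) F <->
  exists (g h : nat -> nat),
    [/\ g 0%N = m, g r = 1%N & (forall k, (k < r)%N -> (g k.+1 <= g k)%N)] /\
    [/\ h 0%N = n, h r = 1%N & (forall k, (k < r)%N -> (h k.+1 <= h k)%N)] /\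
        (exists S : 'I_r -> {set Pt m n r},
          (forall k : 'I_r,
             @is_path m n r (S k) (g k, k * n + h k.+1)%N (g k.+1, k * n + h k)%N) /\
          F = \bigcup_(k < r) S k).
Proof.
have faceE := SR_face_initial hn hdiag.
apply: (iff_trans _ (maximal_diag_free_path_union hn F hm hr)).
by split=> -[F_face F_max]; split=> [|G /faceE]; by [apply/faceE | apply: F_max].
Qed.
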